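(* Let $Q=\{x\in\mathbb{R}^{n+1}:\sum_{i=1}^{n+1}x_i^2/a_i=1\}$ with $0<a_1<\dots<a_{n+1}$. If a nonsingular periodic billiard trajectory inside $Q$ has odd period, then its first caustic $Q_{\lambda_1}$ is an ellipsoid, i.e. $\lambda_1\in(0,a_1)$. In other words, among all nonsingular billiard trajectories inside $Q$, only those with an ellipsoid as caustic can have odd period.
   Context: Confocal quadrics: $Q_\mu=\{\sum x_i^2/(a_i-\mu)=1\}$; every line of a billiard trajectory inside $Q$ is tangent to $n$ confocal quadrics $Q_{\lambda_1},\ldots,Q_{\lambda_n}$ (caustics), $\lambda_1<\dots<\lambda_n$. The trajectory is nonsingular when $\lambda$ lies in $\{0<\lambda_1<\dots<\lambda_n,\ \lambda_i\in(a_{i-1},a_i)\cup(a_i,a_{i+1})\}$, $a_0=0$. $Q_\mu$ is an ellipsoid exactly when $0<\mu<a_1$. *)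

From HB Require Import structures.
From mathcomp Require Import all_boot all_order all_algebra.
From mathcomp Require Import reals.
Set Implicit Arguments. Unset Strict Implicit. Unset Printing Implicit Defensive.
Import Order.TTheory GRing.Theory Num.Theory.
Local Open Scope ring_scope.

Section Billiards.
Variables (R : realType) (n : nat).
(* Points of R^(n+1) are functions 'I_n.+1 -> R; coordinate i (0-based)
   corresponds to the paper's coordinate i+1.  a i is the paper's a_(i+1). *)
Variable a : 'I_n.+1 -> R.

Definition dot (x y : 'I_n.+1 -> R) : R := \sum_i x i * y i.

Definition on_Q (x : 'I_n.+1 -> R) : Prop := \sum_i x i ^+ 2 / a i = 1.

(* (half) gradient of the defining function of Q at x: a normal vector *)
Definition normalQ (x : 'I_n.+1 -> R) : 'I_n.+1 -> R := fun i => x i / a i.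

Definition seg (p : nat -> 'I_n.+1 -> R) (k : nat) : 'I_n.+1 -> R :=
  fun i => p k.+1 i - p k i.

Definition reflect_in (N u : 'I_n.+1 -> R) : 'I_n.+1 -> R :=
  fun i => u i - 2 * dot u N / dot N N * N i.

Definition billiard_traj (p : nat -> 'I_n.+1 -> R) : Prop :=
  (forall k, on_Q (p k)) /\
  (forall k, p k.+1 <> p k) /\
  (forall k, exists c : R, 0 < c /\
       seg p k.+1 = (fun i => c * reflect_in (normalQ (p k.+1)) (seg p k) i)).

(* The line {x + t v} is tangent to the confocal quadric
   Q_mu = { sum y_i^2/(a_i - mu) = 1 } (mu not among the a_i): the quadratic
   equation  sum (x_i + t v_i)^2/(a_i - mu) = 1  in t has a double root,
   i.e. its discriminant B^2 - A C vanishes. *)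
Definition tangent_confocal (x v : 'I_n.+1 -> R) (mu : R) : Prop :=
  (forall i, a i != mu) /\
  let A := \sum_i v i ^+ 2 / (a i - mu) in
  let B := \sum_i x i * v i / (a i - mu) in
  let C := \sum_i x i ^+ 2 / (a i - mu) - 1 in
  B ^+ 2 - A * C = 0.

(* lam_1 < ... < lam_n (0-based: lam 0 < ... < lam (n-1)) are exactly the
   parameters of the confocal quadrics tangent to the line {x + t v}. *)
Definition caustic_params (x v : 'I_n.+1 -> R) (lam : 'I_n -> R) : Prop :=
  (forall i j : 'I_n, (i < j)%N -> lam i < lam j) /\
  (forall mu : R, tangent_confocal x v mu <-> exists i, lam i = mu).

(* paper's a_k for k = 0..n+1, with a_0 = 0 *)
Definition apaper (k : nat) : R := if k is k'.+1 then a (inord k') else 0.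

Definition nonsingular (lam : 'I_n -> R) : Prop :=
  (forall i : 'I_n, (i : nat) = 0%N -> 0 < lam i) /\
  (forall i : 'I_n,
     (apaper i < lam i < apaper i.+1) \/ (apaper i.+1 < lam i < apaper i.+2)).

End Billiards.

(* A reflection in Q preserves tangency of the line to every confocal quadric
   Q_mu (Joachimsthal), so if the first caustic is not an ellipsoid, no segment
   of the trajectory touches any Q_mu with 0 < mu < a_1.  Clearing denominators,
   the tangency discriminant of a chord becomes a polynomial in mu of degree at
   most n; it is positive at mu = 0 and, unless the chord crosses the hyperplane
   {x_1 = 0}, negative at mu = a_1.  Hence every segment crosses that hyperplane,
   the sign of x_1 alternates along the trajectory and the period is even.  A
   chord inside the hyperplane is ruled out by counting roots: it is tangent to
   Q_(a_1) besides its n caustics. *)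

From HB Require Import structures.
From mathcomp Require Import all_boot all_order all_algebra.
From mathcomp Require Import reals ring lra.
From Stdlib Require Import FunctionalExtensionality.
Set Implicit Arguments. Unset Strict Implicit. Unset Printing Implicit Defensive.
Import Order.TTheory GRing.Theory Num.Theory.
Local Open Scope ring_scope.

Lemma psumr_gt0 (R : numDomainType) (I : finType) (S : pred I) (F : I -> R) i :
  S i -> 0 < F i -> (forall j, S j -> 0 <= F j) -> 0 < \sum_(j | S j) F j.
Proof.
move=> Si Fi_gt0 F_ge0; rewrite (bigD1 i) //= ltr_pwDl //.
by apply: sumr_ge0 => j /andP[/F_ge0].
Qed.

Section ConfocalDiscriminant.
Variables (R : realType) (n : nat) (a : 'I_n.+1 -> R).
Hypothesis a_gt0 : forall i, 0 < a i.
Implicit Types (x v y z : 'I_n.+1 -> R) (mu : R).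

Definition qform mu y z := \sum_i y i * z i / (a i - mu).

Definition disc x v mu :=
  let A := \sum_i v i ^+ 2 / (a i - mu) in
  let B := \sum_i x i * v i / (a i - mu) in
  let C := \sum_i x i ^+ 2 / (a i - mu) - 1 in
  B ^+ 2 - A * C.

Lemma discE x v mu :
  disc x v mu = qform mu x v ^+ 2 - qform mu v v * (qform mu x x - 1).
Proof.
by rewrite /disc /qform; congr (_ - _ * (_ - _));
  apply: eq_bigr => i _; rewrite expr2.
Qed.

Lemma qformC mu y z : qform mu y z = qform mu z y.
Proof. by apply: eq_bigr => i _; rewrite (mulrC (y i)). Qed.

Lemma qformDl mu y z w k :
  qform mu (fun i => y i + k * z i) w = qform mu y w + k * qform mu z w.
Proof.
rewrite /qform mulr_sumr -big_split; apply: eq_bigr => i _.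
by rewrite !mulrDl -!mulrA.
Qed.

Lemma qformDr mu y z w k :
  qform mu w (fun i => y i + k * z i) = qform mu w y + k * qform mu w z.
Proof. by rewrite qformC qformDl !(qformC mu w). Qed.

Lemma qformZl mu y z k : qform mu (fun i => k * y i) z = k * qform mu y z.
Proof. by rewrite /qform mulr_sumr; apply: eq_bigr => i _; rewrite -!mulrA. Qed.

Lemma qformZr mu y z k : qform mu z (fun i => k * y i) = k * qform mu z y.
Proof. by rewrite qformC qformZl qformC. Qed.

Lemma disc_translate x v mu t : disc (fun i => x i + t * v i) v mu = disc x v mu.
Proof. by rewrite !discE !(qformDl, qformDr) (qformC mu v x); ring. Qed.

Lemma disc_scale x v mu c : disc x (fun i => c * v i) mu = c ^+ 2 * disc x v mu.
Proof. by rewrite !discE !(qformZl, qformZr); ring. Qed.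

Lemma qform_normalQ mu y z : (forall i, a i != mu) ->
  mu * qform mu y (normalQ a z) = qform mu y z - \sum_i y i * z i / a i.
Proof.
move=> a_neq_mu; rewrite /qform mulr_sumr -sumrB; apply: eq_bigr => i _.
have ai_neq0 : a i != 0 by rewrite gt_eqF.
have ai_mu_neq0 : a i - mu != 0 by rewrite subr_eq0 a_neq_mu.
by rewrite /normalQ; field; rewrite ai_neq0 ai_mu_neq0.
Qed.

(* A form of Joachimsthal's integral. *)
Lemma disc_reflect x v mu : on_Q a x -> mu != 0 -> (forall i, a i != mu) ->
  disc x (reflect_in (normalQ a x) v) mu = disc x v mu.
Proof.
move=> Qx mu_neq0 a_neq_mu; set N := normalQ a x.
set k := 2 * dot v N / dot N N.
have -> : reflect_in N v = (fun i => v i + (- k) * N i).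
  by apply: functional_extensionality => i; rewrite /reflect_in mulNr.
rewrite !discE !(qformDl, qformDr) (qformC mu N v).
set C := qform mu x x - 1; set b := qform mu x v; set c := qform mu v v.
set e := qform mu x N; set f := qform mu v N; set g := qform mu N N.
have mu_e : mu * e = C.
  rewrite /e qform_normalQ // /C; congr (_ - _); rewrite -Qx.
  by apply: eq_bigr => i _; rewrite expr2.
have mu_f : mu * f = b - dot v N.
  rewrite /f qform_normalQ // /b (qformC mu v x); congr (_ - _).
  by rewrite /dot; apply: eq_bigr => i _; rewrite /N /normalQ mulrA.
have mu2_g : mu * (mu * g) = C - mu * dot N N.
  rewrite /g {1}/N qform_normalQ // qformC -/e mulrBr mu_e; congr (_ - mu * _).
  by rewrite /dot; apply: eq_bigr => i _; rewrite /N /normalQ mulrA.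
have [NN0|NN_neq0] := eqVneq (dot N N) 0.
  have -> : k = 0 by rewrite /k NN0 invr0 mulr0.
  by ring.
have k_NN : k * dot N N = 2 * dot v N by rewrite /k; field.
apply: (mulfI (expf_neq0 2 mu_neq0)); apply/eqP; rewrite -subr_eq0.
have -> : mu ^+ 2 * ((b + - k * e) ^+ 2 - (c + - k * f + - k * (f + - k * g)) * C) -
    mu ^+ 2 * (b ^+ 2 - c * C) = -2*k*b*mu*(mu*e) + k^+2*(mu*e)^+2
    + 2*k*C*mu*(mu*f) - k^+2*C*(mu*(mu*g)) by ring.
rewrite mu_e mu_f mu2_g.
have -> : -2*k*b*mu*C + k^+2*C^+2 + 2*k*C*mu*(b - dot v N) - k^+2*C*(C - mu * dot N N)
  = k*C*mu*(k * dot N N - 2 * dot v N) by ring.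
by rewrite k_NN subrr mulr0.
Qed.

Definition cross2 x v i j := (x i * v j - x j * v i) ^+ 2.

Lemma cross2_diag x v i : cross2 x v i i = 0.
Proof. by rewrite /cross2 subrr expr0n. Qed.

Lemma cross2C x v i j : cross2 x v i j = cross2 x v j i.
Proof. by rewrite /cross2; ring. Qed.

(* Lagrange's identity, applied to [B^2 - A (C + 1)]. *)
Lemma disc_lagrange x v mu : disc x v mu =
  \sum_i v i ^+ 2 / (a i - mu)
  - 2^-1 * \sum_i \sum_j cross2 x v i j * ((a i - mu)^-1 * (a j - mu)^-1).
Proof.
set w := fun i => (a i - mu)^-1.
have sum_mul (f g : 'I_n.+1 -> R) :
    \sum_i \sum_j f i * g j = (\sum_i f i) * (\sum_j g j).
  by rewrite mulr_suml; apply: eq_bigr => i _; rewrite mulr_sumr.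
have -> : \sum_i \sum_j cross2 x v i j * (w i * w j) =
  \sum_i \sum_j ((x i ^+ 2 * w i) * (v j ^+ 2 * w j)) +
  \sum_i \sum_j ((v i ^+ 2 * w i) * (x j ^+ 2 * w j)) -
  2 * \sum_i \sum_j ((x i * v i * w i) * (x j * v j * w j)).
  rewrite mulr_sumr -big_split -sumrB; apply: eq_bigr => i _.
  rewrite mulr_sumr -big_split -sumrB; apply: eq_bigr => j _.
  by rewrite /cross2 /=; ring.
by rewrite !sum_mul /disc; field.
Qed.

Definition prod_aX (S : pred 'I_n.+1) : {poly R} := \prod_(k | S k) ((a k)%:P - 'X).

(* [disc x v] times [\prod_k (a_k - X)]: clearing the denominators in
   [disc_lagrange] leaves a polynomial in [mu]. *)
Definition disc_poly x v : {poly R} :=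
  \sum_i v i ^+ 2 *: prod_aX (fun k => k != i)
  - 2^-1 *: \sum_i \sum_j cross2 x v i j *: prod_aX (fun k => (k != i) && (k != j)).

Lemma horner_prod_aX S mu : (prod_aX S).[mu] = \prod_(k | S k) (a k - mu).
Proof.
rewrite /prod_aX horner_prod; apply: eq_bigr => k _.
by rewrite hornerD hornerN hornerC hornerX.
Qed.

Lemma horner_disc_poly_expand x v mu : (disc_poly x v).[mu] =
  \sum_i v i ^+ 2 * \prod_(k | k != i) (a k - mu)
  - 2^-1 * \sum_i \sum_j cross2 x v i j * \prod_(k | (k != i) && (k != j)) (a k - mu).
Proof.
rewrite /disc_poly hornerD hornerN hornerZ !horner_sum; congr (_ - _ * _).
  by apply: eq_bigr => i _; rewrite hornerZ horner_prod_aX.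
apply: eq_bigr => i _; rewrite horner_sum; apply: eq_bigr => j _.
by rewrite hornerZ horner_prod_aX.
Qed.

Lemma horner_disc_poly x v mu : (forall k, a k != mu) ->
  (disc_poly x v).[mu] = disc x v mu * \prod_k (a k - mu).
Proof.
move=> a_neq_mu; set P := \prod_k (a k - mu).
have a_mu_neq0 k : a k - mu != 0 by rewrite subr_eq0 a_neq_mu.
have prod_neq1 i : \prod_(k | k != i) (a k - mu) = P / (a i - mu).
  by rewrite /P [in RHS](bigD1 i) //= mulrC mulKf.
have prod_neq2 i j : i != j ->
    \prod_(k | (k != i) && (k != j)) (a k - mu) = P / (a i - mu) / (a j - mu).
  move=> ij; have ji : j != i by rewrite eq_sym.
  by rewrite -prod_neq1 [in RHS](bigD1 j) //= mulrC mulKf.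
rewrite horner_disc_poly_expand disc_lagrange mulrBl mulr_suml -mulrA mulr_suml.
congr (_ - _ * _).
  by apply: eq_bigr => i _; rewrite prod_neq1 mulrA mulrAC.
apply: eq_bigr => i _; rewrite mulr_suml; apply: eq_bigr => j _.
have [<-|ij] := eqVneq i j; first by rewrite cross2_diag !mul0r.
by rewrite prod_neq2 //; ring.
Qed.

Lemma size_prod_aX S : size (prod_aX S) = #|S|.+1.
Proof.
have size_aX k : size ((a k)%:P - 'X) = 2%N by rewrite -opprB size_polyN size_XsubC.
rewrite /prod_aX size_prod => [|k _]; last by rewrite -size_poly_eq0 size_aX.
by under eq_bigr do rewrite size_aX; rewrite sum_nat_const muln2 -addnn -addSn addnK.
Qed.

Lemma size_prod_aX_le S i : ~~ S i -> (size (prod_aX S) <= n.+1)%N.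
Proof.
move=> notSi; rewrite size_prod_aX ltnS -ltnS -[X in (_ < X)%N]card_ord.
by apply: proper_card; apply/properP; split; [apply/subsetP | exists i].
Qed.

Lemma size_disc_poly x v : (size (disc_poly x v) <= n.+1)%N.
Proof.
rewrite (leq_trans (size_polyD _ _)) // geq_max size_polyN.
apply/andP; split.
  apply: leq_trans (size_sum _ _ _) _; apply/bigmax_leqP => i _.
  by rewrite (leq_trans (size_scale_leq _ _)) // (size_prod_aX_le (i := i)) ?eqxx.
apply: leq_trans (size_scale_leq _ _) _.
apply: leq_trans (size_sum _ _ _) _; apply/bigmax_leqP => i _.
apply: leq_trans (size_sum _ _ _) _; apply/bigmax_leqP => j _.
by rewrite (leq_trans (size_scale_leq _ _)) // (size_prod_aX_le (i := i)) ?eqxx.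
Qed.

(* The limit of [(a_0 - mu) * disc x v mu] as [mu] tends to [a_0]. *)
Definition disc_residue x v :=
  v ord0 ^+ 2 - \sum_(j | j != ord0) cross2 x v ord0 j / (a j - a ord0).

Lemma horner_disc_poly_a0 x v : (forall k, k != ord0 -> a k != a ord0) ->
  (disc_poly x v).[a ord0] = \prod_(k | k != ord0) (a k - a ord0) * disc_residue x v.
Proof.
move=> a_neq_a0; set P := \prod_(k | k != ord0) (a k - a ord0).
have prod_ord0 (S : pred 'I_n.+1) : S ord0 -> \prod_(k | S k) (a k - a ord0) = 0.
  by move=> S0; rewrite (bigD1 ord0) //= subrr mul0r.
have prod_0j j : j != ord0 ->
    \prod_(k | (k != ord0) && (k != j)) (a k - a ord0) = P / (a j - a ord0).
  move=> j0; have aj : a j - a ord0 != 0 by rewrite subr_eq0 a_neq_a0.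
  by rewrite /P [in RHS](bigD1 j) //= mulrC mulKf.
set T := \sum_(j | j != ord0) cross2 x v ord0 j * (P / (a j - a ord0)).
have row0 : \sum_j cross2 x v ord0 j *
    \prod_(k | (k != ord0) && (k != j)) (a k - a ord0) = T.
  rewrite (bigD1 ord0) //= cross2_diag mul0r add0r.
  by apply: eq_bigr => j j0; rewrite prod_0j.
have rows : \sum_(i | i != ord0) \sum_j cross2 x v i j *
    \prod_(k | (k != i) && (k != j)) (a k - a ord0) = T.
  apply: eq_bigr => i i0.
  rewrite [\sum_j _](bigD1 ord0) //= [X in _ + X]big1 ?addr0 => [|j j0].
    rewrite cross2C -prod_0j //; congr (_ * _).
    by apply: eq_bigl => k; rewrite andbC.
  by rewrite prod_ord0 ?mulr0 //= eq_sym i0 eq_sym.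
rewrite horner_disc_poly_expand (bigD1 ord0) //= [X in _ * _ + X]big1 ?addr0.
  rewrite [X in 2^-1 * X](bigD1 ord0) //= row0 rows -/P /disc_residue.
  have -> : T = P * \sum_(j | j != ord0) cross2 x v ord0 j / (a j - a ord0).
    by rewrite /T mulr_sumr; apply: eq_bigr => j _; rewrite mulrCA.
  by field.
by move=> i i0; rewrite prod_ord0 ?mulr0 // eq_sym.
Qed.

Lemma qform0E y z : qform 0 y z = \sum_i y i * z i / a i.
Proof. by apply: eq_bigr => i _; rewrite subr0. Qed.

Lemma qform0_on_Q x : on_Q a x -> qform 0 x x = 1.
Proof. by move=> Qx; rewrite qform0E -Qx; apply: eq_bigr => i _; rewrite expr2. Qed.

Lemma qform0_gt0 v i : v i != 0 -> 0 < qform 0 v v.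
Proof.
move=> vi_neq0; rewrite qform0E (psumr_gt0 (i := i)) // => [|j _].
  by rewrite -expr2 divr_gt0 ?exprn_even_gt0.
by rewrite -expr2 divr_ge0 ?sqr_ge0 ?ltW.
Qed.

Lemma qform0_chord x v : on_Q a x -> on_Q a (fun i => x i + v i) ->
  2 * qform 0 x v + qform 0 v v = 0.
Proof.
move=> Qx Qy; have := qform0_on_Q Qy.
have -> : (fun i => x i + v i) = (fun i => x i + 1 * v i).
  by apply: functional_extensionality => i; rewrite mul1r.
rewrite qformDl !qformDr (qform0_on_Q Qx) (qformC 0 v x); lra.
Qed.

Lemma qform0_chord_line x v t : on_Q a x -> on_Q a (fun i => x i + v i) ->
  qform 0 (fun i => x i + t * v i) (fun i => x i + t * v i)
  = 1 + t * (t - 1) * qform 0 v v.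
Proof.
move=> Qx Qy; have chord := qform0_chord Qx Qy.
rewrite qformDl !qformDr (qform0_on_Q Qx) (qformC 0 v x).
have -> : qform 0 x v = - (qform 0 v v / 2) by lra.
by field.
Qed.

Lemma disc0_gt0 x v i : on_Q a x -> on_Q a (fun i => x i + v i) -> v i != 0 ->
  0 < disc x v 0.
Proof.
move=> Qx Qy vi_neq0; have chord := qform0_chord Qx Qy.
have q_gt0 := qform0_gt0 vi_neq0.
rewrite discE (qform0_on_Q Qx) subrr mulr0 subr0.
have -> : qform 0 x v = - (qform 0 v v / 2) by lra.
by rewrite sqrrN exprn_even_gt0 // mulf_neq0 ?gt_eqF ?invr_gt0.
Qed.

Section BoundaryTerm.
Hypothesis a0_lt : forall k, k != ord0 -> a ord0 < a k.

Lemma shifted_sum_gt1 z : 1 <= \sum_(j | j != ord0) z j ^+ 2 / a j ->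
  1 < \sum_(j | j != ord0) z j ^+ 2 / (a j - a ord0).
Proof.
move=> z_ge1; have a0_gap j : j != ord0 -> 0 < a j - a ord0.
  by move=> j0; rewrite subr_gt0 a0_lt.
have [j /andP[j0 zj_neq0]] : exists j, (j != ord0) && (z j != 0).
  apply/existsP; apply: contraTT z_ge1; rewrite negb_exists => /forallP z_eq0.
  rewrite big1 ?ler10 // => j j0.
  by move: (z_eq0 j); rewrite j0 negbK => /eqP ->; rewrite expr0n mul0r.
have gap k : k != ord0 -> z k ^+ 2 / (a k - a ord0) - z k ^+ 2 / a k =
    z k ^+ 2 * (a ord0 / (a k * (a k - a ord0))).
  move=> k0; have ak_neq0 : a k != 0 by rewrite gt_eqF.
  by have := a0_gap k k0; rewrite lt0r => /andP[ak_a0 _]; field; rewrite ak_neq0 ak_a0.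
have : 0 < \sum_(k | k != ord0) (z k ^+ 2 / (a k - a ord0) - z k ^+ 2 / a k).
  apply: (psumr_gt0 (i := j)) => [//||k k0]; rewrite gap //.
    by rewrite mulr_gt0 ?exprn_even_gt0 ?divr_gt0 ?mulr_gt0 ?a0_gap.
  by rewrite mulr_ge0 ?sqr_ge0 ?divr_ge0 ?mulr_ge0 ?ltW ?a0_gap.
by rewrite sumrB subr_gt0; apply: le_lt_trans.
Qed.

(* When the chord [x, x+v] does not cross the hyperplane {y_0 = 0}, the line
   through it meets this hyperplane in a point [z] outside (or on) [Q], and the
   pole of [disc x v] at [a_0] has the wrong sign. *)
Lemma disc_residue_lt0 x v i :
  on_Q a x -> on_Q a (fun i => x i + v i) -> v i != 0 ->
  ~~ ((x ord0 == 0) && (v ord0 == 0)) -> 0 <= x ord0 * (x ord0 + v ord0) ->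
  disc_residue x v < 0.
Proof.
move=> Qx Qy vi_neq0 nondeg no_cross.
have a0_gap j : j != ord0 -> 0 < a j - a ord0 by move=> j0; rewrite subr_gt0 a0_lt.
have [v0_eq0|v0_neq0] := eqVneq (v ord0) 0.
  rewrite v0_eq0 eqxx andbT in nondeg.
  have i0 : i != ord0 by apply: contraNneq vi_neq0 => ->; rewrite v0_eq0.
  rewrite /disc_residue v0_eq0 expr0n sub0r oppr_lt0 (psumr_gt0 (i := i)) // => [|j j0].
    by rewrite divr_gt0 ?a0_gap // /cross2 v0_eq0 mulr0 subr0 exprn_even_gt0 ?mulf_neq0.
  by rewrite divr_ge0 ?sqr_ge0 ?ltW ?a0_gap.
set t0 := - x ord0 / v ord0; set z := fun j => x j + t0 * v j.
have z0 : z ord0 = 0 by rewrite /z /t0; field.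
have cross2_z j : cross2 x v ord0 j = v ord0 ^+ 2 * z j ^+ 2.
  by rewrite /cross2 /z /t0; field.
have v02_gt0 : 0 < v ord0 ^+ 2 by rewrite exprn_even_gt0.
have t0_outside : 0 <= t0 * (t0 - 1).
  have : x ord0 * (x ord0 + v ord0) = t0 * (t0 - 1) * v ord0 ^+ 2 by rewrite /t0; field.
  by move: no_cross => /[swap] ->; rewrite pmulr_lge0.
have zz_ge1 : 1 <= \sum_(j | j != ord0) z j ^+ 2 / a j.
  have <- : qform 0 z z = \sum_(j | j != ord0) z j ^+ 2 / a j.
    rewrite qform0E (bigD1 ord0) //= z0 !mul0r add0r.
    by apply: eq_bigr => j _; rewrite expr2.
  rewrite qform0_chord_line // lerDl mulr_ge0 // ltW //.
  exact: qform0_gt0 vi_neq0.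
rewrite /disc_residue (eq_bigr (fun k => v ord0 ^+ 2 * (z k ^+ 2 / (a k - a ord0)))).
  rewrite -mulr_sumr -[X in X - _]mulr1 -mulrBr pmulr_rlt0 // subr_lt0.
  exact: shifted_sum_gt1 zz_ge1.
by move=> k _; rewrite cross2_z mulrA.
Qed.

Lemma a_neq_a0 k : k != ord0 -> a k != a ord0.
Proof. by move=> k0; rewrite gt_eqF ?a0_lt. Qed.

Lemma a_neq_lt_a0 mu k : mu < a ord0 -> a k != mu.
Proof.
move=> mu_lt_a0; have [->|k0] := eqVneq k ord0; first by rewrite gt_eqF.
by rewrite gt_eqF // (lt_trans mu_lt_a0) ?a0_lt.
Qed.

Lemma horner_disc_poly0_gt0 x v i :
  on_Q a x -> on_Q a (fun i => x i + v i) -> v i != 0 -> 0 < (disc_poly x v).[0].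
Proof.
move=> Qx Qy vi_neq0; rewrite horner_disc_poly => [|k]; last by rewrite gt_eqF.
by rewrite mulr_gt0 ?(disc0_gt0 Qx Qy vi_neq0) // prodr_gt0 // => k _; rewrite subr0.
Qed.

(* [disc_poly x v] is positive at [0] and, for a chord not crossing
   {y_0 = 0}, negative at [a_0]; a root in between is a caustic parameter. *)
Lemma chord_crosses_hyperplane x v i :
  on_Q a x -> on_Q a (fun i => x i + v i) -> v i != 0 ->
  ~~ ((x ord0 == 0) && (v ord0 == 0)) ->
  (forall mu, 0 < mu < a ord0 -> disc x v mu != 0) ->
  x ord0 * (x ord0 + v ord0) < 0.
Proof.
move=> Qx Qy vi_neq0 nondeg no_caustic; rewrite ltNge; apply/negP => no_cross.
have P0_gt0 := horner_disc_poly0_gt0 Qx Qy vi_neq0.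
have Pa0_lt0 : (disc_poly x v).[a ord0] < 0.
  rewrite (horner_disc_poly_a0 _ _ a_neq_a0) pmulr_rlt0.
    exact: disc_residue_lt0 Qx Qy vi_neq0 nondeg no_cross.
  by apply: prodr_gt0 => k k0; rewrite subr_gt0 a0_lt.
have [mu /andP[mu_ge0 mu_le_a0]] := @poly_ivt R (- disc_poly x v) 0 (a ord0)
  (ltW (a_gt0 ord0)) ltac:(by rewrite !hornerN oppr_le0 oppr_ge0 ?ltW).
rewrite rootN => /eqP P_mu.
have mu_gt0 : 0 < mu.
  by rewrite lt_neqAle mu_ge0 andbT; apply: contra_eqN P_mu => /eqP <-; rewrite gt_eqF.
have mu_lt_a0 : mu < a ord0.
  by rewrite lt_neqAle mu_le_a0 andbT; apply: contra_eqN P_mu => /eqP ->; rewrite lt_eqF.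
move: P_mu; rewrite horner_disc_poly => [|k]; last exact: a_neq_lt_a0.
move=> /eqP; rewrite mulf_eq0 => /orP[].
  by apply/negP; apply: no_caustic; rewrite mu_gt0 mu_lt_a0.
rewrite prodf_seq_eq0 => /hasP[k _ /=].
by rewrite subr_eq0 (negPf (a_neq_lt_a0 _ mu_lt_a0)).
Qed.

(* A chord lying in {y_0 = 0} is tangent to [Q_{a_0}] as well; together with
   [n] further caustics this gives [disc_poly x v] more roots than its degree. *)
Lemma chord_in_hyperplane_caustics x v i (lam : 'I_n -> R) :
  on_Q a x -> on_Q a (fun i => x i + v i) -> v i != 0 ->
  x ord0 = 0 -> v ord0 = 0 -> injective lam ->
  ~ (forall j, tangent_confocal a x v (lam j)).
Proof.
move=> Qx Qy vi_neq0 x0 v0 lam_inj tangent.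
have P0_gt0 := horner_disc_poly0_gt0 Qx Qy vi_neq0.
have P_neq0 : disc_poly x v != 0.
  by apply: contraTneq P0_gt0 => ->; rewrite horner0 ltxx.
set rs := a ord0 :: [seq lam j | j <- enum 'I_n].
have rs_uniq : uniq rs.
  rewrite /= map_inj_uniq ?enum_uniq // andbT.
  by apply/mapP => -[j _ /eqP]; rewrite (negPf ((tangent j).1 ord0)).
have rs_roots : all (root (disc_poly x v)) rs.
  rewrite /= /root (horner_disc_poly_a0 _ _ a_neq_a0) /disc_residue v0.
  rewrite [X in 0 ^+ 2 - X]big1 => [|j _]; last first.
    by rewrite /cross2 x0 v0 mul0r mulr0 subrr expr0n mul0r.
  rewrite expr0n subrr mulr0 eqxx /=.
  apply/allP => _ /mapP[j _ ->].
  by rewrite /root (horner_disc_poly _ _ (tangent j).1) [disc _ _ _](tangent j).2 mul0r.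
have := max_poly_roots P_neq0 rs_roots rs_uniq.
by rewrite /= size_map size_enum_ord ltnNge size_disc_poly.
Qed.

End BoundaryTerm.

End ConfocalDiscriminant.

Lemma alternating_period_even (R : realDomainType) (f : nat -> R) m :
  (forall k, f k * f k.+1 < 0) -> f m = f 0 -> ~~ odd m.
Proof.
move=> flip periodic; apply/negP => m_odd.
have sign k : 0 < (-1) ^+ k * (f k * f 0).
  elim: k => [|k IH].
    have f0_neq0 : f 0%N != 0 by apply: contraTneq (flip 0%N) => ->; rewrite mul0r ltxx.
    by rewrite expr0 mul1r -expr2 exprn_even_gt0.
  by have := flip k; rewrite exprS; nra.
have := sign m; rewrite periodic -signr_odd m_odd expr1 mulN1r oppr_gt0.
by rewrite -expr2 ltNge sqr_ge0.
Qed.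

Section BilliardTrajectory.
Variables (R : realType) (n : nat) (a : 'I_n.+1 -> R) (p : nat -> 'I_n.+1 -> R).
Hypotheses (a_gt0 : forall i, 0 < a i) (a0_lt : forall k, k != ord0 -> a ord0 < a k).
Hypothesis traj : billiard_traj a p.

Lemma seg_neq0 k : exists i, seg p k i != 0.
Proof.
apply/existsP; rewrite -negb_forall; apply/negP => /forallP seg_eq0.
apply: (traj.2.1 k); apply: functional_extensionality => i.
by apply/eqP; rewrite -subr_eq0; exact: seg_eq0 i.
Qed.

Lemma traj_step k : p k.+1 = (fun i => p k i + 1 * seg p k i).
Proof. by apply: functional_extensionality => i; rewrite /seg mul1r addrC subrK. Qed.

Lemma traj_chord k : on_Q a (fun i => p k i + seg p k i).
Proof.
have := traj.1 k.+1; rewrite traj_step.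
by congr (on_Q a _); apply: functional_extensionality => i; rewrite mul1r.
Qed.

Lemma traj_disc_neq0 mu k : mu != 0 -> (forall i, a i != mu) ->
  disc a (p 0) (seg p 0) mu != 0 -> disc a (p k) (seg p k) mu != 0.
Proof.
move=> mu_neq0 a_neq_mu disc0_neq0; elim: k => [//|k IH].
have [c [c_gt0 ->]] := traj.2.2 k.
rewrite disc_scale (disc_reflect a_gt0 _ (traj.1 k.+1)) //.
by rewrite [in X in disc _ X _]traj_step disc_translate mulf_neq0 // expf_neq0 // gt_eqF.
Qed.

Lemma traj_off_hyperplane k :
  ~~ ((p 0 ord0 == 0) && (seg p 0 ord0 == 0)) ->
  ~~ ((p k ord0 == 0) && (seg p k ord0 == 0)).
Proof.
move=> off0; elim: k => [//|k IH]; apply: contraNN IH => /andP[/eqP p1_0 /eqP seg1_0].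
have [c [c_gt0 seg_refl]] := traj.2.2 k.
have seg0 : seg p k ord0 = 0.
  move/(congr1 (fun u => u ord0)): seg_refl.
  rewrite seg1_0 /reflect_in /normalQ p1_0 mul0r mulr0 subr0 => /esym/eqP.
  by rewrite mulf_eq0 gt_eqF //= => /eqP.
by move: (seg0); rewrite {1}/seg p1_0 sub0r => /eqP; rewrite oppr_eq0 seg0 eqxx andbT.
Qed.

Lemma traj_crosses k :
  (forall mu, 0 < mu < a ord0 -> disc a (p 0) (seg p 0) mu != 0) ->
  ~~ ((p 0 ord0 == 0) && (seg p 0 ord0 == 0)) ->
  p k ord0 * p k.+1 ord0 < 0.
Proof.
move=> no_caustic off0; have [i segi_neq0] := seg_neq0 k.
rewrite traj_step mul1r.
apply: (chord_crosses_hyperplane a_gt0 a0_lt (traj.1 k) (traj_chord k) segi_neq0).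
  exact: traj_off_hyperplane.
move=> mu /andP[mu_gt0 mu_lt_a0]; apply: traj_disc_neq0.
- by rewrite gt_eqF.
- by move=> j; apply: a_neq_lt_a0.
- by apply: no_caustic; rewrite mu_gt0.
Qed.

End BilliardTrajectory.

Theorem corollary1 (R : realType) (n : nat) (hn : (0 < n)%N)
  (a : 'I_n.+1 -> R) (ha0 : 0 < a ord0)
  (ha : forall i j : 'I_n.+1, (i < j)%N -> a i < a j)
  (p : nat -> 'I_n.+1 -> R) (hp : billiard_traj a p)
  (lam : 'I_n -> R) (hlam : caustic_params a (p 0%N) (seg p 0%N) lam)
  (hns : nonsingular a lam)
  (m : nat) (hm : odd m) (hper : forall k, p (k + m)%N = p k) :
  forall i : 'I_n, (i : nat) = 0%N -> 0 < lam i < a ord0.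
Proof.
move=> i i0; rewrite hns.1 //=.
have a0_lt k : k != ord0 -> a ord0 < a k.
  by move=> k0; apply: ha; rewrite lt0n; apply: contraNneq k0 => k_0; apply/eqP/val_inj.
have a_gt0 k : 0 < a k.
  by have [->|k0] := eqVneq k ord0; last exact: lt_trans ha0 (a0_lt k k0).
have inord0 : inord 0 = ord0 :> 'I_n.+1 by apply: val_inj; rewrite /= inordK.
have := hns.2 i; rewrite /apaper i0 inord0.
case=> [/andP[_ //] | /andP[a0_lt_lami _]]; exfalso.
have lam_gt_a0 j : a ord0 < lam j.
  apply: (lt_le_trans a0_lt_lami); have [ij|ij] := eqVneq i j; first by rewrite ij.
  apply/ltW/hlam.1; rewrite i0 lt0n; apply: contraNneq ij => j0.
  by apply/eqP/val_inj; rewrite /= i0 j0.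
have no_caustic mu : 0 < mu < a ord0 -> disc a (p 0%N) (seg p 0%N) mu != 0.
  case/andP=> _ mu_lt_a0; apply/eqP => disc0.
  have [j lamj] := (hlam.2 mu).1 (conj (fun k => a_neq_lt_a0 a0_lt k mu_lt_a0) disc0).
  by have := lam_gt_a0 j; rewrite lamj ltNge ltW.
have off0 : ~~ ((p 0%N ord0 == 0) && (seg p 0%N ord0 == 0)).
  apply/negP => /andP[/eqP x0 /eqP v0]; have [j segj] := seg_neq0 hp 0%N.
  apply: (chord_in_hyperplane_caustics a_gt0 a0_lt (hp.1 0%N) (traj_chord hp 0)
    segj x0 v0 (inc_inj (le_mono hlam.1))).
  by move=> j'; apply/(hlam.2 _).2; exists j'.
apply/negP: hm; apply: (alternating_period_even (f := fun k => p k ord0)).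
  by move=> k; exact: traj_crosses a_gt0 a0_lt hp k no_caustic off0.
by rewrite -{1}[m]add0n hper.
Qed.
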